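(* Let $G$ be an infinite discrete countable group, $(X,\mu,G)$ a $G$-measure preserving system and $B\in\mathcal{B}_X^\mu$. If $\{U_g1_B:g\in G\}$ is precompact in $L^2(\mu)$, then $h^*_\mu(G,\{B,B^c\})=0$.
   Context: $(X,\mu,G)$: compact metric space with $G$ acting by homeomorphisms and $G$-invariant Borel probability $\mu$; $\mathcal{B}_X^\mu$ is the $\mu$-completed Borel $\sigma$-algebra; $U_gf(x)=f(gx)$. For a finite partition $\alpha$ into sets of $\mathcal{B}_X^\mu$ and a sequence $\mathcal{A}=(g_n)$ in $G$, $h^{\mathcal{A}}_\mu(G,\alpha)=\limsup_n\frac1nH_\mu(\bigvee_{i=1}^ng_i^{-1}\alpha)$ with $H_\mu(\beta)=-\sum_{C\in\beta}\mu(C)\log\mu(C)$, and $h^*_\mu(G,\alpha)=\sup_{\mathcal{A}}h^{\mathcal{A}}_\mu(G,\alpha)$ over all sequences in $G$. *)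

From HB Require Import structures.
From mathcomp Require Import all_boot all_order all_algebra.
From mathcomp Require Import monoid.
From mathcomp Require Import all_classical all_reals all_analysis.
From mathcomp Require Import measurable_realfun hoelder.

Set Implicit Arguments.
Unset Strict Implicit.
Unset Printing Implicit Defensive.

Import Order.TTheory GRing.Theory Num.Theory.
Import numFieldNormedType.Exports.

Local Open Scope classical_set_scope.
Local Open Scope ring_scope.

Definition borel (X : ptopologicalType) := g_sigma_algebraType (@open X).

(* The mu-completion B_X^mu of the sigma-algebra of mu:
   sets of the form A \cup N with A measurable and N mu-negligible. *)
Definition completion_sets d (T : measurableType d) (R : realType)
  (mu : {measure set T -> \bar R}) : set (set T) := completed_algebra_gen mu.

(* The completed measure space (carrier T, completed measure mu^* ). *)
Definition completed_space d (T : measurableType d) (R : realType)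
  (mu : {measure set T -> \bar R}) := caratheodory_type (mu^*)%mu.

(* Shannon entropy H_nu(beta) = - sum_{C in beta} nu(C) log nu(C) of a finite
   family of sets beta : I -> set T (I finite); ln 0 = 0 so 0 log 0 = 0. *)
Definition entropy (T : Type) (R : realType) (nu : set T -> \bar R)
  (I : finType) (beta : I -> set T) : R :=
  - \sum_(i : I) (fine (nu (beta i)) * ln (fine (nu (beta i)))).

(* The join \bigvee_{i=1}^n g_i^{-1} alpha of the pulled-back partitions,
   for alpha : J -> set T finite and a sequence A = (g_i)_{i >= 1} of G acting
   on T via act (so that g^{-1} C = act g @^-1` C = {x | g x \in C}).
   Its atoms are indexed by the choice functions c : 'I_n -> J. *)
Definition join_pullback (G T : Type) (act : G -> T -> T) (J : finType)
  (alpha : J -> set T) (A : nat -> G) (n : nat) : {ffun 'I_n -> J} -> set T :=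
  fun c => \bigcap_(i in [set: 'I_n]) (act (A (val i).+1) @^-1` alpha (c i)).
Arguments join_pullback {G T} act {J} alpha A n.

Definition seq_entropy (G T : Type) (R : realType) (nu : set T -> \bar R)
  (act : G -> T -> T) (J : finType) (alpha : J -> set T) (A : nat -> G)
  : \bar R :=
  limn_esup (fun n => ((n%:R)^-1 * entropy nu (join_pullback act alpha A n))%:E).

Definition max_seq_entropy (G T : Type) (R : realType) (nu : set T -> \bar R)
  (act : G -> T -> T) (J : finType) (alpha : J -> set T) : \bar R :=
  ereal_sup [set seq_entropy nu act alpha A | A in [set: nat -> G]].

Definition part2 (T : Type) (B : set T) : bool -> set T :=
  fun b => if b then B else ~` B.

Definition L2_precompact d (T : measurableType d) (R : realType)
  (nu : {measure set T -> \bar R}) (G : Type) (F : G -> T -> R) : Prop :=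
  forall u : nat -> G, exists phi : nat -> nat,
    (forall n, (phi n < phi n.+1)%N) /\
    exists f : T -> R,
      [/\ measurable_fun [set: T] f,
          ('N[nu]_(2%:E)[EFin \o f] < +oo)%E &
          ((fun n => ('N[nu]_(2%:E)[EFin \o (F (u (phi n)) \- f)%R])%E) @ \oo
             --> (0 : \bar R))].

From HB Require Import structures.
From mathcomp Require Import all_boot all_order all_algebra.
From mathcomp Require Import monoid.
From mathcomp Require Import all_classical all_reals all_analysis.
From mathcomp Require Import measurable_realfun hoelder.
From mathcomp Require Import ring lra.

Import Order.TTheory GRing.Theory Num.Theory.
Import numFieldNormedType.Exports.
Local Open Scope classical_set_scope.
Local Open Scope ring_scope.

(* Precompactness makes the translates of 1_B totally bounded in L^2: for
   e > 0 there are finitely many g_1, ..., g_K such that every g^-1 B differs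
   from some g_k^-1 B on a set of measure at most e^2 (the squared L^2 distance
   of two indicators).  The label of a point in the n-th join of the g_i^-1
   {B, B^c} is thus determined by its K labels for the g_k^-1 B and n error
   bits, each of small probability.  Subadditivity of entropy, together with
   H(p) <= 3 sqrt p for a bit of probability p, gives
   H_n <= K ln 2 + 3 e n, so h^A <= 3 e for every sequence A. *)

Section real_inequalities.
Variable R : realType.
Implicit Types x : R.

Lemma ln_le_subr1 x : 0 < x -> ln x <= x - 1.
Proof. by move=> x0; have := @le_ln1Dx R (x - 1); rewrite addrCA subrr addr0; apply; lra. Qed.

Lemma ln_prod (I : Type) (s : seq I) (F : I -> R) :
  (forall i, 0 < F i) -> ln (\prod_(i <- s) F i) = \sum_(i <- s) ln (F i).
Proof.
move=> F0; elim: s => [|a s IH]; first by rewrite !big_nil ln1.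
by rewrite !big_cons lnM ?posrE ?IH //; apply: prodr_gt0.
Qed.

Lemma gibbs_inequality (I : finType) (p q : I -> R) :
  (forall i, 0 <= p i) -> \sum_i p i = 1 ->
  (forall i, 0 <= q i) -> \sum_i q i <= 1 -> (forall i, 0 < p i -> 0 < q i) ->
  - \sum_i p i * ln (p i) <= - \sum_i p i * ln (q i).
Proof.
move=> p0 p1 q0 q1 pq; rewrite lerN2.
suff : \sum_i (p i * ln (q i) - p i * ln (p i)) <= \sum_i (q i - p i).
  by rewrite !sumrB p1; lra.
apply: ler_sum => i _.
have [->|pi0] := eqVneq (p i) 0; first by rewrite !mul0r subrr subr0.
have pi_gt0 : 0 < p i by rewrite lt_def pi0 p0.
have qi_gt0 := pq i pi_gt0.
rewrite -mulrBr -ln_div ?posrE //.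
have -> : q i - p i = p i * (q i / p i - 1) by field.
by rewrite ler_pM2l // ln_le_subr1 // divr_gt0.
Qed.

Lemma Nxlnx_le_sqrt x : 0 <= x -> - (x * ln x) <= 2 * Num.sqrt x.
Proof.
move=> x0; have [->|xn0] := eqVneq x 0; first by rewrite mul0r oppr0 sqrtr0 mulr0.
set s := Num.sqrt x.
have s_gt0 : 0 < s by rewrite sqrtr_gt0 lt_def xn0.
have /ln_le_subr1 : 0 < s^-1 by rewrite invr_gt0.
rewrite lnV ?posrE // => lns.
have -> : - (x * ln x) = 2 * s ^+ 2 * (- ln s).
  by rewrite -[in LHS](sqr_sqrtr x0) -/s lnXn // mulr2n; ring.
apply: (@le_trans _ _ (2 * s ^+ 2 * (s^-1 - 1))).
  by rewrite ler_pM2l // mulr_gt0 // exprn_gt0.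
have -> : 2 * s ^+ 2 * (s^-1 - 1) = 2 * s - 2 * s ^+ 2 by field; rewrite gt_eqF.
have : 0 <= s ^+ 2 by rewrite sqr_ge0.
lra.
Qed.

(* The bound [x <= sqrt x] on [0, 1] absorbs the [(1 - x) ln (1 - x)] term. *)
Lemma binary_entropy_le_sqrt x : 0 <= x <= 1 ->
  - (x * ln x + (1 - x) * ln (1 - x)) <= 3 * Num.sqrt x.
Proof.
move=> /andP[x0 x1].
have xlnx_le := Nxlnx_le_sqrt x x0.
have ylny_le : - ((1 - x) * ln (1 - x)) <= x.
  have [->|ne] := eqVneq (1 - x) 0; first by rewrite mul0r oppr0.
  have y_gt0 : 0 < 1 - x by rewrite lt_def ne subr_ge0.
  have /ln_le_subr1 : 0 < (1 - x)^-1 by rewrite invr_gt0.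
  rewrite lnV ?posrE // => lny.
  apply: (@le_trans _ _ ((1 - x) * ((1 - x)^-1 - 1))); first by rewrite -mulrN ler_pM2l.
  by have -> : (1 - x) * ((1 - x)^-1 - 1) = x by field.
have x_le_sqrt : x <= Num.sqrt x.
  rewrite -{1}(sqr_sqrtr x0) expr2 ler_piMr ?sqrtr_ge0 //.
  by rewrite -sqrtr1 ler_sqrt.
lra.
Qed.

End real_inequalities.

Definition measurable_fibres {d} {T : measurableType d} {I : Type} (f : T -> I) :=
  forall i, measurable (f @^-1` [set i]).

Definition pmf {R : realType} {T : Type} (P : set T -> \bar R) {I : Type}
  (f : T -> I) (i : I) : R := fine (P (f @^-1` [set i])).

Definition rv_entropy {R : realType} {T : Type} (P : set T -> \bar R) {I : finType}
  (f : T -> I) : R := entropy P (fun i => f @^-1` [set i]).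

Section measurable_boolean_labels.
Context {d} {T : measurableType d}.

Lemma measurable_fibres_bool (b : T -> bool) :
  measurable [set x | b x] -> measurable_fibres b.
Proof.
move=> mb [] /=; first by rewrite (_ : _ @^-1` _ = [set x | b x]).
rewrite (_ : _ @^-1` _ = ~` [set x | b x]); first exact: measurableC.
by apply/seteqP; split => x /=; case: (b x).
Qed.

Lemma measurable_fibres_ffun {J : finType} (f : T -> {ffun J -> bool}) :
  (forall j, measurable [set x | f x j]) -> measurable_fibres f.
Proof.
move=> mf c.
rewrite (_ : _ @^-1` _ = \bigcap_(j in [set: J]) ((fun x => f x j) @^-1` [set c j])).
  by apply: fin_bigcap_measurable => // j _; exact: measurable_fibres_bool.
by apply/seteqP; split => [x /= <- //|x /= fc]; apply/ffunP => j; exact: fc.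
Qed.

Lemma measurable_addb (a b : T -> bool) :
  measurable [set x | a x] -> measurable [set x | b x] ->
  measurable [set x | a x (+) b x].
Proof.
move=> ma mb; rewrite (_ : [set x | _] =
  ([set x | a x] `\` [set x | b x]) `|` ([set x | b x] `\` [set x | a x])).
  by apply: measurableU; exact: measurableD.
apply/seteqP; split => x /=; case: (a x); case: (b x) => //=;
  [by left|by right|by case=> -[]|by case=> -[]].
Qed.

End measurable_boolean_labels.

Section finite_valued_entropy.
Context {d} {T : measurableType d} {R : realType}.
Variable P : {measure set T -> \bar R}.
Hypothesis P1 : P setT = 1%E.

Lemma rv_entropyE {I : finType} (f : T -> I) :
  rv_entropy P f = - \sum_i pmf P f i * ln (pmf P f i).
Proof. by []. Qed.

Lemma comp_fibresE {I J : finType} (f : T -> I) (g : I -> J) j :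
  (g \o f) @^-1` [set j] = \bigcup_(i in [set` (fun i => g i == j)]) f @^-1` [set i].
Proof.
apply/seteqP; split => [x /= <-|x [i /= /eqP <- ->//]].
by exists (f x) => //; exact: eqxx.
Qed.

Lemma measurable_fibres_comp {I J : finType} (f : T -> I) (g : I -> J) :
  measurable_fibres f -> measurable_fibres (g \o f).
Proof.
by move=> mf j; rewrite comp_fibresE; apply: fin_bigcup_measurable => //; exact: finite_finset.
Qed.

Lemma measure_comp_fibres {I J : finType} (f : T -> I) (g : I -> J) j :
  measurable_fibres f ->
  P ((g \o f) @^-1` [set j]) = (\sum_(i | g i == j) P (f @^-1` [set i]))%E.
Proof.
move=> mf; rewrite comp_fibresE measure_fin_bigcup //; last exact: trivIset_preimage1.
by rewrite -(@bigfs _ _ _ _ (index_enum I)) ?index_enum_uniq // => i _; rewrite mem_index_enum.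
Qed.

Lemma measure_le1 {A : set T} : measurable A -> (P A <= 1)%E.
Proof. by move=> mA; rewrite -P1 le_measure ?inE. Qed.

Lemma measure_fin_num {A : set T} : measurable A -> P A \is a fin_num.
Proof. by move=> mA; rewrite ge0_fin_numE // (le_lt_trans (measure_le1 mA)) ?ltry. Qed.

Lemma pmfE {I : Type} (f : T -> I) i :
  measurable_fibres f -> (pmf P f i)%:E = P (f @^-1` [set i]).
Proof.
by move=> mf; rewrite /pmf fineK // measure_fin_num.
Qed.

Lemma pmf_ge0 {I : Type} (f : T -> I) i : 0 <= pmf P f i.
Proof. by rewrite /pmf fine_ge0. Qed.

Lemma le_pmf {I J : Type} (f : T -> I) (g : T -> J) i j :
  measurable_fibres f -> measurable_fibres g ->
  f @^-1` [set i] `<=` g @^-1` [set j] -> pmf P f i <= pmf P g j.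
Proof. by move=> mf mg fg; rewrite -lee_fin !pmfE //; apply: le_measure; rewrite ?inE. Qed.

Lemma pmf_comp {I J : finType} (f : T -> I) (g : I -> J) j :
  measurable_fibres f -> pmf P (g \o f) j = \sum_(i | g i == j) pmf P f i.
Proof.
move=> mf; apply: EFin_inj; rewrite pmfE; last exact: measurable_fibres_comp.
by rewrite measure_comp_fibres // -sumEFin; apply: eq_bigr => i _; rewrite pmfE.
Qed.

Lemma sum_pmf {I : finType} (f : T -> I) : measurable_fibres f -> \sum_i pmf P f i = 1.
Proof.
move=> mf; have := pmf_comp f (fun=> tt) tt mf.
have -> : pmf P ((fun=> tt) \o f) tt = 1.
  by rewrite /pmf (_ : _ @^-1` _ = setT) ?P1 //; apply/seteqP; split.
by move=> ->; apply: eq_bigl => i; rewrite eqxx.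
Qed.

Lemma sum_pmf_comp {I J : finType} (f : T -> I) (g : I -> J) (phi : J -> R) :
  measurable_fibres f ->
  \sum_j pmf P (g \o f) j * phi j = \sum_i pmf P f i * phi (g i).
Proof.
move=> mf; rewrite (partition_big g xpredT) //=; apply: eq_bigr => j _.
by rewrite pmf_comp // mulr_suml; apply: eq_bigr => i /eqP <-.
Qed.

Lemma entropy_ge0 {I : finType} (beta : I -> set T) :
  (forall i, measurable (beta i)) -> 0 <= entropy P beta.
Proof.
move=> mbeta; rewrite /entropy oppr_ge0; apply: sumr_le0 => i _.
by rewrite mulr_ge0_le0 ?fine_ge0 ?ln_le0 // -lee_fin fineK ?measure_fin_num ?measure_le1.
Qed.

Lemma seq_entropy_ge0 {G : Type} {J : finType} (act : G -> T -> T) (alpha : J -> set T)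
    (A : nat -> G) :
  (forall g j, measurable (act g @^-1` alpha j)) -> (0 <= seq_entropy P act alpha A)%E.
Proof.
move=> mpre; apply: limf_esup_ge0 => // n; rewrite lee_fin mulr_ge0 ?invr_ge0 //.
by apply: entropy_ge0 => c; apply: fin_bigcap_measurable => // i _; exact: mpre.
Qed.

Lemma rv_entropy_comp_le {I J : finType} (f : T -> I) (g : I -> J) :
  measurable_fibres f -> rv_entropy P (g \o f) <= rv_entropy P f.
Proof.
move=> mf; rewrite !rv_entropyE (sum_pmf_comp f g (fun j => ln (pmf P (g \o f) j))) //.
rewrite lerN2; apply: ler_sum => i _.
have [->|pi0] := eqVneq (pmf P f i) 0; first by rewrite !mul0r.
have pi_gt0 : 0 < pmf P f i by rewrite lt_def pi0 pmf_ge0.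
have le_fg : pmf P f i <= pmf P (g \o f) (g i).
  by apply: le_pmf => //; [exact: measurable_fibres_comp|move=> x /= ->].
by rewrite ler_pM2l // ler_ln ?posrE // (lt_le_trans pi_gt0).
Qed.

(* Gibbs' inequality against the product of the marginals. *)
Lemma rv_entropy_ffun_le {J K : finType} (f : T -> {ffun J -> K}) :
  measurable_fibres f ->
  rv_entropy P f <= \sum_j rv_entropy P ((fun c : {ffun J -> K} => c j) \o f).
Proof.
move=> mf; set marg := fun j => pmf P ((fun c : {ffun J -> K} => c j) \o f).
have mmarg j : measurable_fibres ((fun c : {ffun J -> K} => c j) \o f).
  exact: measurable_fibres_comp.
have le_marg c j : pmf P f c <= marg j (c j).
  by apply: le_pmf => // x /= ->.
have -> : \sum_j rv_entropy P ((fun c : {ffun J -> K} => c j) \o f) =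
          - \sum_c pmf P f c * ln (\prod_j marg j (c j)).
  rewrite (eq_bigr (fun j => - \sum_c pmf P f c * ln (marg j (c j)))); last first.
    by move=> j _; rewrite rv_entropyE (sum_pmf_comp f _ (fun k => ln (marg j k))).
  rewrite sumrN exchange_big; congr (- _); apply: eq_bigr => c _; rewrite -mulr_sumr.
  have [->|pc0] := eqVneq (pmf P f c) 0; first by rewrite !mul0r.
  have pc_gt0 : 0 < pmf P f c by rewrite lt_def pc0 pmf_ge0.
  by rewrite ln_prod // => j; exact: lt_le_trans pc_gt0 (le_marg c j).
apply: gibbs_inequality.
- by move=> c; exact: pmf_ge0.
- exact: sum_pmf.
- by move=> c; apply: prodr_ge0 => j _; exact: pmf_ge0.
- by rewrite -bigA_distr_bigA /= big1 // => j _; rewrite sum_pmf.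
- by move=> c pc_gt0; apply: prodr_gt0 => j _; exact: lt_le_trans pc_gt0 (le_marg c j).
Qed.

Lemma rv_entropy_bool_le_ln2 (b : T -> bool) : measurable_fibres b -> rv_entropy P b <= ln 2.
Proof.
move=> mb; apply: (@le_trans _ _ (- \sum_i pmf P b i * ln 2^-1)).
  apply: gibbs_inequality.
  - by move=> i; exact: pmf_ge0.
  - exact: sum_pmf.
  - by move=> i; rewrite invr_ge0.
  - by rewrite big_bool /= -div1r -splitr.
  - by move=> i _; rewrite invr_gt0.
by rewrite -mulr_suml sum_pmf // mul1r lnV ?posrE // opprK.
Qed.

Lemma rv_entropy_bool_le_sqrt (b : T -> bool) :
  measurable_fibres b -> rv_entropy P b <= 3 * Num.sqrt (pmf P b true).
Proof.
move=> mb; have := sum_pmf b mb; rewrite rv_entropyE !big_bool /= => pmf_sum.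
have -> : pmf P b false = 1 - pmf P b true by rewrite -pmf_sum; ring.
by apply: binary_entropy_le_sqrt; rewrite pmf_ge0 -pmf_sum lerDl pmf_ge0.
Qed.

(* Each [f i] is recovered from the [K] coarse labels [h] and its own
   error bit [f i (+) h (k i)], whose entropy is small. *)
Lemma rv_entropy_le_approx {n K : nat} (f : 'I_n -> T -> bool) (h : 'I_K -> T -> bool)
    (k : 'I_n -> 'I_K) (e : R) :
  (forall i, measurable [set x | f i x]) -> (forall j, measurable [set x | h j x]) ->
  0 <= e -> (forall i, (P [set x | f i x (+) h (k i) x] <= (e ^+ 2)%:E)%E) ->
  rv_entropy P (fun x => [ffun i => f i x]) <= K%:R * ln 2 + n%:R * (3 * e).
Proof.
move=> mf mh e0 close.
pose Y x : {ffun 'I_K + 'I_n -> bool} := [ffun j =>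
  match j with inl j => h j x | inr i => f i x (+) h (k i) x end].
pose decode (y : {ffun 'I_K + 'I_n -> bool}) : {ffun 'I_n -> bool} :=
  [ffun i => y (inr i) (+) y (inl (k i))].
have -> : (fun x => [ffun i => f i x]) = decode \o Y.
  by apply/funext => x; apply/ffunP => i; rewrite !ffunE addbK.
have mY : measurable_fibres Y.
  apply: measurable_fibres_ffun => -[j|i] /=.
    by under eq_set do rewrite ffunE.
  by under eq_set do rewrite ffunE; exact: measurable_addb.
apply: (le_trans (rv_entropy_comp_le _ decode mY)).
apply: (le_trans (rv_entropy_ffun_le _ mY)); rewrite big_sumType /=.
have sum_cst m (c : R) : \sum_(i < m) c = m%:R * c by rewrite sumr_const card_ord mulr_natl.
rewrite -(sum_cst K) -(sum_cst n).
apply: lerD; apply: ler_sum => j _.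
  by apply: rv_entropy_bool_le_ln2; exact: measurable_fibres_comp.
apply: (le_trans (rv_entropy_bool_le_sqrt _ (measurable_fibres_comp _ _ mY))).
rewrite ler_pM2l // -(ger0_norm e0) -sqrtr_sqr ler_sqrt ?sqr_ge0 // -lee_fin /pmf.
have -> : ((fun c : {ffun _ -> bool} => c (inr j)) \o Y) @^-1` [set true] =
          [set x | f j x (+) h (k j) x].
  by apply/seteqP; split => x; rewrite /= ffunE.
by rewrite fineK ?close // measure_fin_num //; exact: measurable_addb.
Qed.

End finite_valued_entropy.

(* A sequence with no two terms close to each other is built greedily
   whenever no finite family is an approximating net. *)
Lemma finite_net_of_clustering {G : Type} (g0 : G) (close : G -> G -> Prop) :
  (forall u : nat -> G, exists m n, (m < n)%N /\ close (u n) (u m)) ->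
  exists K (s : 'I_K -> G), forall g, exists k, close g (s k).
Proof.
move=> clustering; apply: contrapT => no_net.
have far (s : seq G) : exists g, forall m, (m < size s)%N -> ~ close g (nth g0 s m).
  apply: contrapT => not_far; apply: no_net.
  exists (size s), (fun k : 'I_(size s) => nth g0 s k) => g.
  apply: contrapT => g_far; apply: not_far; exists g => m ms gm.
  by apply: g_far; exists (Ordinal ms).
have [pick pickP] := choice far.
pose w n := iter n (fun s => rcons s (pick s)) [::].
pose u n := pick (w n).
have size_w n : size (w n) = n by elim: n => //= n IH; rewrite size_rcons IH.
have nth_w m n : (m < n)%N -> nth g0 (w n) m = u m.
  elim: n => // n IH; rewrite ltnS leq_eqVlt => /orP[/eqP ->|mn] /=.
    by rewrite nth_rcons size_w ltnn eqxx.
  by rewrite nth_rcons size_w mn IH.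
have [m [n [mn]]] := clustering u.
by rewrite -(nth_w _ _ mn); apply: pickP; rewrite size_w.
Qed.

Section L2_distance.
Context {d} {T : measurableType d} {R : realType}.
Variable nu : {measure set T -> \bar R}.
Local Open Scope ereal_scope.

Lemma Lnorm_subr_le {p : R} {f g h : T -> R} :
  measurable_fun setT f -> measurable_fun setT g -> measurable_fun setT h -> (1 <= p)%R ->
  'N[nu]_p%:E[EFin \o (f \- g)%R] <=
    'N[nu]_p%:E[EFin \o (f \- h)%R] + 'N[nu]_p%:E[EFin \o (g \- h)%R].
Proof.
move=> mf mg mh p1.
have -> : (f \- g = (f \- h) \+ \- (g \- h))%R by apply/funext => x /=; ring.
apply: (le_trans (minkowski_EFin nu (measurable_funB mf mh)
  (measurable_funN (measurable_funB mg mh)) p1)).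
rewrite (eq_Lnorm nu _ (f := EFin \o (\- (g \- h))%R) (g := \- (EFin \o (g \- h)%R))).
  by rewrite oppe_Lnorm.
by move=> x /=; rewrite EFinN.
Qed.

(* The symmetric difference is written as a xor of memberships; its measure is
   the squared L^2 distance of the indicators. *)
Lemma measure_addb_le_Lnorm2 (S1 S2 : set T) (e : R) :
  measurable S1 -> measurable S2 ->
  'N[nu]_2%:E[EFin \o (\1_S1 \- \1_S2)%R] < e%:E ->
  nu [set x | (x \in S1) (+) (x \in S2)] <= (e ^+ 2)%:E.
Proof.
move=> mS1 mS2; set N := 'N[nu]_2%:E[_] => Ne.
have mX : measurable [set x | (x \in S1) (+) (x \in S2)].
  by apply: measurable_addb; rewrite set_mem_set.
have NE : N `^ 2 = nu [set x | (x \in S1) (+) (x \in S2)].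
  rewrite poweR_Lnorm ?pnatr_eq0 //.
  transitivity (\int[nu]_x (\1_[set x | (x \in S1) (+) (x \in S2)] x)%:E); last first.
    by rewrite integral_indic // setIT.
  apply: eq_integral => x _ /=.
  rewrite !indicE.
  have -> : x \in [set x | (x \in S1) (+) (x \in S2)] = (x \in S1) (+) (x \in S2).
    exact: asboolb.
  by case: (x \in S1); case: (x \in S2);
    rewrite /= ?subrr ?subr0 ?sub0r ?normrN ?normr0 ?normr1 ?powR1 ?powR0.
have N0 : 0 <= N := Lnorm_ge0 _ _ _.
have Nfin : N \is a fin_num by rewrite ge0_fin_numE // (lt_trans Ne) ?ltry.
move: Ne N0; rewrite -NE -(fineK Nfin) lte_fin lee_fin poweR_EFin lee_fin.
by move=> Ne N0; rewrite powR_mulrn //; nra.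
Qed.

Lemma L2_precompact_totally_bounded {G : Type} (g0 : G) (F : G -> T -> R) :
  (forall g, measurable_fun setT (F g)) -> L2_precompact nu F ->
  forall e : R, (0 < e)%R -> exists K (s : 'I_K -> G),
    forall g, exists k, 'N[nu]_2%:E[EFin \o (F g \- F (s k))%R] < e%:E.
Proof.
move=> mF Fpre e e_gt0.
pose close g h := 'N[nu]_2%:E[EFin \o (F g \- F h)%R] < e%:E.
apply: (finite_net_of_clustering g0 close) => u.
have [phi [phi_incr [f [mf _ /fine_cvgP[fin_N /cvgr_lt N_lt]]]]] := Fpre u.
have e2_gt0 : (0 < e / 2)%R by rewrite divr_gt0.
have [N _ closeN] :
    \forall n \near \oo, 'N[nu]_2%:E[EFin \o (F (u (phi n)) \- f)%R] < (e / 2)%:E.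
  by apply: filterS2 fin_N (N_lt _ e2_gt0) => n /fineK <-; rewrite lte_fin.
exists (phi N), (phi N.+1); split; first exact: phi_incr.
apply: (le_lt_trans (Lnorm_subr_le (mF _) (mF _) mf _)); first by rewrite ler1n.
apply: (lt_le_trans (lteD (closeN _ (leqnSn N)) (closeN _ (leqnn N)))).
by rewrite -EFinD -splitr.
Qed.

End L2_distance.

Section completed_borel.
Context {R : realType} {X : pseudoPMetricType R}.

Lemma measurable_preimage_continuous (f : X -> X) (A : set (borel X)) :
  continuous f -> measurable A -> measurable (f @^-1` A : set (borel X)).
Proof.
move=> fc mA.
have mf : measurable_fun (setT : set (borel X)) (f : borel X -> borel X).
  apply: (@measurability _ _ (borel X) (borel X) setT f (@open X)) => //.
  move=> _ [U oU <-]; rewrite setTI; apply: sub_sigma_algebra.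
  by apply: open_comp => // x _; exact: fc.
by have := mf measurableT A mA; rewrite setTI.
Qed.

(* [f] maps null sets to null sets, so preimages of completed sets stay complete. *)
Lemma measurable_completed_preimage (mu : probability (borel X) R) (f : X -> X)
    (B : set X) :
  continuous f -> (forall A : set (borel X), measurable A -> mu (f @^-1` A) = mu A) ->
  completion_sets mu B -> measurable (f @^-1` B : set (completed_space mu)).
Proof.
move=> fc f_inv [A mA [N [M [mM M0 NM]] <-]].
rewrite preimage_setU; apply: measurableU.
  by apply: caratheodory_measurable_mu_ext; exact: measurable_preimage_continuous.
apply: measure_is_complete_caratheodory; exists (f @^-1` M); split.
- by apply: caratheodory_measurable_mu_ext; exact: measurable_preimage_continuous.
- transitivity (mu (f @^-1` M)); last by rewrite f_inv.
  by apply: measurable_mu_extE; exact: measurable_preimage_continuous.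
- by move=> x /= /NM.
Qed.

End completed_borel.

Lemma limn_esup_div_le {R : realType} (h : nat -> R) (c a : R) : 0 <= c ->
  (forall n, h n <= c + n%:R * a) -> (limn_esup (fun n => (n%:R^-1 * h n)%:E) <= a%:E)%E.
Proof.
move=> c0 h_le; apply/lee_addgt0Pr => e e_gt0.
pose N := (Num.truncn (c / e)).+1.
apply: (@le_trans _ _ (ereal_sup [set (k%:R^-1 * h k)%:E | k in [set k | (N <= k)%N]])).
  by apply: ereal_inf_lbound; exists [set k | (N <= k)%N] => //; exists N.
apply: ge_ereal_sup => _ [k Nk <-]; rewrite -EFinD lee_fin.
have k_gt0 : 0 < k%:R :> R by rewrite ltr0n (leq_trans _ Nk).
have ck : c / e < k%:R by rewrite (lt_le_trans (truncnS_gt _)) // ler_nat.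
have ck_le : k%:R^-1 * c <= e.
  by rewrite ler_pdivrMl //; apply: ltW; rewrite -ltr_pdivrMr.
apply: (le_trans (ler_wpM2l _ (h_le k))); first by rewrite invr_ge0 ltW.
by rewrite mulrDr mulrA mulVf ?gt_eqF // mul1r; lra.
Qed.

Lemma join_pullback_part2 {G T : Type} (act : G -> T -> T) (B : set T) (A : nat -> G) n :
  join_pullback act (part2 B) A n =
  (fun c => (fun x => [ffun i : 'I_n => x \in act (A i.+1) @^-1` B]) @^-1` [set c]).
Proof.
apply/funext => c; apply/seteqP; split => x /=.
  move=> xc; apply/ffunP => i; rewrite ffunE; move: (xc i I); rewrite /part2.
  by case: (c i) => /= Bx; [rewrite mem_set|rewrite memNset].
move=> <- i _; rewrite /part2 ffunE.
by case: ifPn => [/set_mem|/negP xB Bx] //; apply: xB; exact: mem_set.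
Qed.

Lemma max_seq_entropy_eq0 {G T : Type} {R : realType} (nu : set T -> \bar R)
    (act : G -> T -> T) {J : finType} (alpha : J -> set T) (g0 : G) :
  (forall A, seq_entropy nu act alpha A = 0%E) -> max_seq_entropy nu act alpha = 0%E.
Proof.
move=> seq0; rewrite /max_seq_entropy (_ : [set _ | A in _] = [set 0%E]) ?ereal_sup1 //.
apply/seteqP; split => [_ [A _ <-]|_ ->] /=; first by rewrite seq0.
by exists (fun=> g0); rewrite ?seq0.
Qed.

Section two_set_partition.
Context {d} {T : measurableType d} {R : realType} {G : Type}.
Variables (P : {measure set T -> \bar R}) (act : G -> T -> T) (B : set T).
Hypotheses (P1 : P setT = 1%E) (mB : forall g, measurable (act g @^-1` B)).

Lemma seq_entropy_part2_ge0 A : (0 <= seq_entropy P act (part2 B) A)%E.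
Proof.
apply: (seq_entropy_ge0 P P1) => g [] //=.
by rewrite preimage_setC; exact/measurableC/mB.
Qed.

Lemma seq_entropy_part2_le {K : nat} (s : 'I_K -> G) (k : G -> 'I_K) (e : R) :
  0 <= e ->
  (forall g, (P [set x | (x \in act g @^-1` B) (+) (x \in act (s (k g)) @^-1` B)]
                <= (e ^+ 2)%:E)%E) ->
  forall A, (seq_entropy P act (part2 B) A <= (3 * e)%:E)%E.
Proof.
move=> e0 close A; apply: (limn_esup_div_le _ (K%:R * ln 2)) => [|n].
  by rewrite mulr_ge0 // ln_ge0 // ler1n.
rewrite join_pullback_part2 -/(rv_entropy P _).
apply: (rv_entropy_le_approx P P1 (fun i x => x \in act (A i.+1) @^-1` B)
  (fun j x => x \in act (s j) @^-1` B) (fun i => k (A i.+1))) => // [i|j];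
by rewrite set_mem_set.
Qed.

End two_set_partition.

Theorem lemmaB2 (R : realType)
  (* G : an infinite countable (discrete) group *)
  (G : groupType) (G_countable : countable [set: G])
  (G_infinite : infinite_set [set: G])
  (* X : a compact metric space *)
  (X : pseudoPMetricType R) (X_hausdorff : hausdorff_space X)
  (X_compact : compact [set: X])
  (* G acts on X by homeomorphisms (left action x |-> g x) *)
  (act : G -> X -> X)
  (act1 : forall x, act 1%g x = x)
  (actM : forall g h x, act (g * h)%g x = act g (act h x))
  (act_cont : forall g, continuous (act g))
  (* mu : a G-invariant Borel probability measure on X *)
  (mu : probability (borel X) R)
  (mu_inv : forall (g : G) (A : set (borel X)),
      measurable A -> mu (act g @^-1` A) = mu A)
  (* B in the mu-completed Borel sigma-algebra *)
  (B : set X) (mB : completion_sets mu B) :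
  L2_precompact (@completed_measure_extension _ _ _ mu)
    (fun g : G => fun x : completed_space mu => \1_B (act g x) : R) ->
  max_seq_entropy (@completed_measure_extension _ _ _ mu) act (part2 B) = 0%E.
Proof.
set nu := @completed_measure_extension _ _ _ mu => Bpre.
have nu1 : nu setT = 1%E by rewrite -(probability_setT mu); exact: measurable_mu_extE.
have mBg g : measurable (act g @^-1` B : set (completed_space mu)).
  exact: measurable_completed_preimage (act_cont g) (mu_inv g) mB.
have indic_act g : (fun x : completed_space mu => \1_B (act g x) : R) = \1_(act g @^-1` B).
  by apply/funext => x; rewrite !indicE.
have mF g : measurable_fun setT (fun x : completed_space mu => \1_B (act g x) : R).
  by rewrite indic_act; exact: measurable_indic.
apply: (max_seq_entropy_eq0 _ _ _ 1%g) => A.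
apply/le_anti/andP; split; last exact: seq_entropy_part2_ge0.
apply/lee_addgt0Pr => e e_gt0; rewrite add0e.
have e3_gt0 : 0 < e / 3 by rewrite divr_gt0.
have [K [s /choice[k s_net]]] := L2_precompact_totally_bounded nu 1%g _ mF Bpre _ e3_gt0.
rewrite -[e](@divfK _ 3) ?pnatr_eq0 // mulrC.
apply: (seq_entropy_part2_le nu act B nu1 mBg s k _ (ltW e3_gt0)) => g.
by apply: measure_addb_le_Lnorm2 => //; rewrite -!indic_act; exact: s_net.
Qed.
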